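(* Let $K\subseteq\mathbb{R}$ be Abel sequentially compact and let $F\subseteq K$ be Abel sequentially closed. Then $F$ is Abel sequentially compact.
   Context: A sequence $(p_n)_{n\ge0}$ is Abel convergent to $\ell$ if $\sum_{k=0}^{\infty}p_k x^k$ converges for every $0\le x<1$ and $\lim_{x\to 1^-}(1-x)\sum_{k=0}^{\infty}p_k x^k=\ell$. A subset $F\subseteq\mathbb{R}$ is Abel sequentially compact if every sequence of points of $F$ has a subsequence Abel convergent to a limit belonging to $F$. The Abel sequential closure $\overline{F}^{Abel}$ of $F$ is the set of all $\ell\in\mathbb{R}$ such that some sequence of points of $F$ is Abel convergent to $\ell$; $F$ is Abel sequentially closed if $\overline{F}^{Abel}=F$. *)

From Stdlib Require Import Reals.
From Coquelicot Require Import Coquelicot.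
Open Scope R_scope.

Definition abel_convergent (p : nat -> R) (l : R) : Prop :=
  (forall x : R, 0 <= x < 1 -> ex_series (fun k => p k * x ^ k)) /\
  filterlim (fun x => (1 - x) * Series (fun k => p k * x ^ k))
            (at_left 1) (locally l).

Definition strictly_increasing (phi : nat -> nat) : Prop :=
  forall n m : nat, (n < m)%nat -> (phi n < phi m)%nat.

Definition abel_seq_compact (F : R -> Prop) : Prop :=
  forall p : nat -> R, (forall n, F (p n)) ->
    exists phi : nat -> nat, strictly_increasing phi /\
      exists l : R, F l /\ abel_convergent (fun n => p (phi n)) l.

Definition abel_closure (F : R -> Prop) : R -> Prop :=
  fun l => exists p : nat -> R, (forall n, F (p n)) /\ abel_convergent p l.

Definition abel_seq_closed (F : R -> Prop) : Prop :=
  forall l : R, abel_closure F l <-> F l.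

From Stdlib Require Import Reals.
From Coquelicot Require Import Coquelicot.
Open Scope R_scope.

Lemma abel_seq_closed_limit (F : R -> Prop) (p : nat -> R) (l : R) :
  abel_seq_closed F -> (forall n, F (p n)) -> abel_convergent p l -> F l.
Proof.
  intros HF Hp Hl.
  apply (proj1 (HF l)).
  exists p; split; assumption.
Qed.

Theorem corollary15 (K F : R -> Prop) :
  abel_seq_compact K ->
  (forall x, F x -> K x) ->
  abel_seq_closed F ->
  abel_seq_compact F.
Proof.
  intros HK HFK HF p Hp.
  destruct (HK p (fun n => HFK _ (Hp n))) as [phi [Hphi [l [_ Hl]]]].
  exists phi; split; [exact Hphi |].
  exists l; split; [| exact Hl].
  exact (abel_seq_closed_limit F (fun n => p (phi n)) l HF (fun n => Hp (phi n)) Hl).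
Qed.
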